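(* Every induced subcomplex of a unimodular simplicial complex is unimodular.
   Context: A simplicial complex on a finite ground set $V$ is a family of subsets of $V$ closed under subsets; facets are inclusion-maximal faces. For $W\subseteq V$ the induced subcomplex is $\{F\in\mathcal{C}:F\subseteq W\}$ on ground set $W$. $\mathcal{A}_{\mathcal{C}}$ is the $0/1$ matrix with columns indexed by $\mathbf{i}\in\{1,2\}^V$ and rows indexed by pairs $(F,\mathbf{e})$, $F$ a facet, $\mathbf{e}\in\{1,2\}^F$; entry $1$ iff $\mathbf{e}=\mathbf{i}|_F$. An integer matrix is unimodular if every circuit (nonzero integer kernel vector with coprime entries and inclusion-minimal support) has entries in $\{0,\pm1\}$; $\mathcal{C}$ is unimodular if $\mathcal{A}_{\mathcal{C}}$ is. *)

From mathcomp Require Import all_boot all_order all_algebra.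
Set Implicit Arguments. Unset Strict Implicit. Unset Printing Implicit Defensive.
Import Order.TTheory GRing.Theory Num.Theory.
Local Open Scope ring_scope.

Definition simplicial_complex (V : finType) (C : {set {set V}}) : Prop :=
  forall F G : {set V}, F \in C -> G \subset F -> G \in C.

Definition facet (V : finType) (C : {set {set V}}) (F : {set V}) : bool :=
  (F \in C) && [forall G in C, (F \subset G) ==> (G == F)].

Definition ground (V : finType) (W : {set V}) : finType := {x : V | x \in W}.

Definition induced (V : finType) (C : {set {set V}}) (W : {set V})
  : {set {set ground W}} :=
  [set [set x : ground W | val x \in F] | F : {set V} in C & F \subset W].

(* Encoding of {1,2}: a vector i in {1,2}^V is encoded by the set
   {v | i_v = 2}; a vector e in {1,2}^F (F a facet) by the subset
   {v in F | e_v = 2} of F.  Then e = i|_F  iff  i :&: F = e. *)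
Definition row_index (V : finType) (C : {set {set V}}) :=
  {p : {set V} * {set V} | facet C p.1 && (p.2 \subset p.1)}.

Definition A_mat (V : finType) (C : {set {set V}})
  (r : row_index C) (i : {set V}) : int :=
  if i :&: (val r).1 == (val r).2 then 1 else 0.

Section Unimod.
Variables (Rw Cl : finType) (A : Rw -> Cl -> int).

Definition in_kernel (x : {ffun Cl -> int}) : bool :=
  [forall r, \sum_(c : Cl) A r c * x c == 0].

Definition supp (x : {ffun Cl -> int}) : {set Cl} := [set c | x c != 0].

Definition circuit (x : {ffun Cl -> int}) : Prop :=
  [/\ in_kernel x, x != 0,
      \big[gcdn/0%N]_(c : Cl) `|x c|%N = 1%N &
      forall y : {ffun Cl -> int}, in_kernel y -> y != 0 ->
        supp y \subset supp x -> supp y = supp x].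

Definition unimodular_mat : Prop :=
  forall x, circuit x -> forall c, x c \in [:: 0; 1; -1].
End Unimod.

Definition unimodular_complex (V : finType) (C : {set {set V}}) : Prop :=
  @unimodular_mat (row_index C) {set V} (@A_mat V C).

From mathcomp Require Import all_boot all_order all_algebra.
Set Implicit Arguments. Unset Strict Implicit. Unset Printing Implicit Defensive.
Import GRing.Theory.

(* Row (F, e) of A_C sums x over the columns i with i :&: F = e, so x is in
   the kernel iff all these marginals vanish on facets, equivalently on all
   faces, because a marginal on a face is a sum of marginals on a facet
   containing it.  Extending a vector x on {set W} by zero to {set V} thus
   maps the kernel of A_(C|W) onto the kernel vectors of A_C supported on
   subsets of W: a face F of C enters only through F :&: W, again a face.
   Extension by zero preserves supports (up to the embedding), entries and
   gcds, hence sends circuits of A_(C|W) to circuits of A_C. *)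

Local Open Scope ring_scope.

Section Marginals.
Variable U : finType.
Implicit Types (D : {set {set U}}) (F G e : {set U}) (x : {ffun {set U} -> int}).

Definition marginal x F e : int := \sum_(i | i :&: F == e) x i.

Lemma marginal_coarsen x G F e : G \subset F ->
  marginal x G e = \sum_(e' | e' :&: G == e) marginal x F e'.
Proof.
move=> sGF; rewrite /marginal (partition_big (fun i => i :&: F) (fun e' => e' :&: G == e)).
  apply: eq_bigr => e' /eqP eGe; apply: eq_bigl => i; rewrite andb_idl // => /eqP iFe.
  by rewrite -eGe -iFe -setIA (setIidPr sGF).
by move=> i; rewrite -setIA (setIidPr sGF).
Qed.

Lemma marginal_notsub x F e : ~~ (e \subset F) -> marginal x F e = 0.
Proof.
by move=> neF; rewrite /marginal big_pred0 // => i; apply: contraNF neF => /eqP <-; rewrite subsetIr.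
Qed.

Lemma A_mat_row_sum D x (r : row_index D) :
  \sum_i A_mat r i * x i = marginal x (val r).1 (val r).2.
Proof.
rewrite /marginal [RHS]big_mkcond; apply: eq_bigr => i _.
by rewrite /A_mat; case: ifP; rewrite ?mul1r ?mul0r.
Qed.

Lemma facet_exists D F : F \in D -> exists2 G, facet D G & F \subset G.
Proof.
move=> FD; have [G /maxsetP[GD maxG] sFG] := maxset_exists (P := fun F => F \in D) FD.
exists G => //; rewrite /facet GD; apply/forall_inP => H HD.
by apply/implyP => sGH; rewrite (maxG H).
Qed.

Lemma in_kernel_marginalP D x :
  in_kernel (@A_mat U D) x <-> forall F e, F \in D -> marginal x F e = 0.
Proof.
split=> [/forallP ker F e FD | marg0].
  have [G fG sFG] := facet_exists FD.
  rewrite (marginal_coarsen _ _ sFG) big1 // => e' _.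
  have [seG | /marginal_notsub //] := boolP (e' \subset G).
  have rowG : facet D (G, e').1 && ((G, e').2 \subset (G, e').1) by rewrite fG.
  by have /eqP := ker (exist _ (G, e') rowG); rewrite A_mat_row_sum.
apply/forallP => r; rewrite A_mat_row_sum; apply/eqP; apply: marg0.
by case: r => -[F e] /= /andP[/andP[]].
Qed.
End Marginals.

Section ExtensionByZero.
Variables (V : finType) (W : {set V}).
Implicit Types (F : {set V}) (j k : {set ground W}).
Implicit Types (x : {ffun {set ground W} -> int}) (z : {ffun {set V} -> int}).

Definition embS j : {set V} := val @: j.
Definition resS F : {set ground W} := [set y | val y \in F].

Lemma embS_sub j : embS j \subset W.
Proof. by apply/subsetP => _ /imsetP[y _ ->]; apply: valP. Qed.

Lemma embSK : cancel embS resS.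
Proof. by move=> j; apply/setP => y; rewrite inE mem_imset //; apply: val_inj. Qed.

Lemma resSK F : F \subset W -> embS (resS F) = F.
Proof.
move=> sFW; apply/setP => v; apply/imsetP/idP => [[y] | vF].
  by rewrite inE => yF ->.
by exists (exist _ v (subsetP sFW v vF)); rewrite ?inE.
Qed.

Lemma embS_inj : injective embS.
Proof. exact: can_inj embSK. Qed.

Lemma embSI j k : embS (j :&: k) = embS j :&: embS k.
Proof. by apply: imsetI => y y' _ _; apply: val_inj. Qed.

Lemma big_embS (R : Type) (idx : R) (op : Monoid.com_law idx) (f : {set V} -> R) :
  (forall F, ~~ (F \subset W) -> f F = idx) ->
  \big[op/idx]_F f F = \big[op/idx]_j f (embS j).
Proof.
move=> f_out; rewrite (bigID (fun F => F \subset W)) /= [X in op _ X]big1 // Monoid.mulm1.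
rewrite (reindex_onto embS resS) => [|F /resSK //].
by apply: eq_bigl => j; rewrite embS_sub embSK eqxx.
Qed.

Lemma mem_induced (C : {set {set V}}) j : (j \in induced C W) = (embS j \in C).
Proof.
apply/imsetP/idP => [[F] | jC].
  by rewrite inE => /andP[FC sFW] ->; rewrite resSK.
by exists (embS j); [rewrite inE jC embS_sub | rewrite -[RHS]/(resS _) embSK].
Qed.

Definition extv x : {ffun {set V} -> int} :=
  [ffun F : {set V} => if F \subset W then x (resS F) else 0].
Definition resv z : {ffun {set ground W} -> int} := [ffun j => z (embS j)].

Lemma extv_embS x j : extv x (embS j) = x j.
Proof. by rewrite ffunE embS_sub embSK. Qed.

Lemma extv_out x F : ~~ (F \subset W) -> extv x F = 0.
Proof. by rewrite ffunE => /negbTE ->. Qed.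

Lemma extvK : cancel extv resv.
Proof. by move=> x; apply/ffunP => j; rewrite ffunE extv_embS. Qed.

Lemma resvK z : (forall F, z F != 0 -> F \subset W) -> extv (resv z) = z.
Proof.
move=> zW; apply/ffunP => F; rewrite ffunE.
have [sFW | nFW] := boolP (F \subset W); first by rewrite ffunE resSK.
by apply/esym/eqP; apply: contraNT nFW => /zW.
Qed.

Lemma supp_extv x : supp (extv x) = embS @: supp x.
Proof.
apply/setP => F; rewrite inE.
have [sFW | nFW] := boolP (F \subset W).
  by rewrite -(resSK sFW) extv_embS mem_imset ?inE //; apply: embS_inj.
rewrite extv_out ?eqxx //; apply/esym/imsetP => -[j _ defF].
by rewrite defF embS_sub in nFW.
Qed.

Lemma extv_eq0 x : (extv x == 0) = (x == 0).
Proof.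
apply/eqP/eqP => [x0 | ->]; apply/ffunP => F; last by rewrite !ffunE if_same.
by rewrite -[x]extvK x0 !ffunE.
Qed.

Lemma supp_extvS x y : (supp (extv x) \subset supp (extv y)) = (supp x \subset supp y).
Proof.
rewrite !supp_extv; apply/idP/idP => [/subsetP sxy | /imsetS //].
by apply/subsetP => j jx; have := sxy (embS j); rewrite !mem_imset //; [apply | apply: embS_inj..].
Qed.

Lemma gcd_extv x : \big[gcdn/0%N]_F `|extv x F|%N = \big[gcdn/0%N]_j `|x j|%N.
Proof.
rewrite big_embS => [|F /extv_out -> //].
by apply: eq_bigr => j _; rewrite extv_embS.
Qed.

Lemma marginal_extv x j k : marginal (extv x) (embS j) (embS k) = marginal x j k.
Proof.
rewrite /marginal big_mkcond big_embS => [|F /extv_out ->]; last first.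
  by rewrite if_same.
rewrite [RHS]big_mkcond; apply: eq_bigr => i _.
by rewrite -embSI (inj_eq embS_inj) extv_embS.
Qed.

Lemma marginal_extvI x F e : marginal (extv x) F e = marginal (extv x) (F :&: W) e.
Proof.
rewrite /marginal big_mkcond [RHS]big_mkcond; apply: eq_bigr => i _.
have [sIW | /extv_out ->] := boolP (i \subset W); last by rewrite !if_same.
by rewrite setIA (setIidPl (subset_trans (subsetIl i F) sIW)).
Qed.

Variable C : {set {set V}}.
Hypothesis complexC : simplicial_complex C.

Lemma in_kernel_extv x :
  in_kernel (@A_mat V C) (extv x) <-> in_kernel (@A_mat _ (induced C W)) x.
Proof.
split=> /in_kernel_marginalP marg0; apply/in_kernel_marginalP; [move=> j k | move=> F e FC].
  by rewrite mem_induced -marginal_extv; apply: marg0.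
rewrite marginal_extvI.
have [seW | neW] := boolP (e \subset W); last first.
  by apply: marginal_notsub; apply: contra neW => /subset_trans; apply; rewrite subsetIr.
rewrite -(resSK seW) -(resSK (subsetIr F W)) marginal_extv; apply: marg0.
by rewrite mem_induced resSK ?subsetIr //; apply: complexC FC _; rewrite subsetIl.
Qed.

Lemma circuit_extv x :
  circuit (@A_mat _ (induced C W)) x -> circuit (@A_mat V C) (extv x).
Proof.
case=> xker x_neq0 x_gcd x_min; split.
- exact/in_kernel_extv.
- by rewrite extv_eq0.
- by rewrite gcd_extv.
move=> z zker z_neq0 sz.
have zW F : z F != 0 -> F \subset W.
  move=> zF; have := subsetP sz F; rewrite inE supp_extv => /(_ zF) /imsetP[j _ ->].
  exact: embS_sub.
rewrite -(resvK zW) extv_eq0 supp_extvS in zker z_neq0 sz *.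
by rewrite !supp_extv (x_min (resv z)) //; apply/in_kernel_extv.
Qed.
End ExtensionByZero.

Theorem proposition3p1 (V : finType) (C : {set {set V}}) (W : {set V}) :
  simplicial_complex C -> unimodular_complex C ->
  unimodular_complex (induced C W).
Proof.
move=> complexC unimodC x x_circuit j.
by rewrite -(extv_embS x j); apply: unimodC; apply: circuit_extv.
Qed.
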